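(* For any integers $k, m \ge 1$, \[ B(k,m) = \sum_{a=1}^{2k-m-1}\left[\binom{m}{k-a} - \binom{m}{k}\right] \] (an empty sum being $0$). Consequently, for $2 \le k \le m$, the number of Grassmannian permutations of $[m]$ avoiding $\operatorname{id}_k=12\cdots k$ equals this sum.
   Context: For $k \ge 1$ and $m \ge 0$, $B(k,m)$ is the number of binary words of length $m$ that avoid (i.e. do not contain as a not-necessarily-contiguous subsequence) every word $0^j1^{k-j}$ for $j \in \{0,1,\dots,k\}$. A permutation is Grassmannian if it has at most one descent; pattern containment/avoidance is the usual notion for permutations. Binomial coefficients $\binom{p}{q}$ are $0$ when $q<0$ or $q>p$. *)

From mathcomp Require Import all_boot all_order all_algebra all_fingroup.
Set Implicit Arguments. Unset Strict Implicit. Unset Printing Implicit Defensive.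
Import GRing.Theory Num.Theory.

(* Binomial coefficient with integer lower index: 0 when q < 0
   (and 'C(p, q) = 0 for q > p already). *)
Definition binz (p : nat) (q : int) : nat :=
  match q with Posz n => 'C(p, n) | Negz _ => 0%N end.

(* Binary words of length m avoiding every 0^j 1^(k-j), j = 0..k
   (false = 0, true = 1; containment = not-necessarily-contiguous subsequence). *)
Definition binpat (k j : nat) : seq bool := nseq j false ++ nseq (k - j) true.

Definition avoids_all_binpats (k : nat) (w : seq bool) : bool :=
  [forall j : 'I_k.+1, ~~ subseq (binpat k j) w].

Definition B (k m : nat) : nat :=
  #|[set w : m.-tuple bool | avoids_all_binpats k w]|.

Definition Bsum (k m : nat) : int :=
  (\sum_(1 <= a < (2 * k - m)%N)
     ((binz m (k%:Z - a%:Z))%:Z - ('C(m, k))%:Z))%R.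

Definition order_iso (t p : seq nat) : bool :=
  (size t == size p) &&
  [forall i : 'I_(size p), forall j : 'I_(size p),
     (nth 0 t i < nth 0 t j) == (nth 0 p i < nth 0 p j)].

Definition contains (p w : seq nat) : bool :=
  [exists msk : (size w).-tuple bool, order_iso (mask msk w) p].

Definition avoids (p w : seq nat) : bool := ~~ contains p w.

Definition perm_word (m : nat) (s : {perm 'I_m}) : seq nat :=
  [seq (s i).+1 | i <- enum 'I_m].

Definition descents (w : seq nat) : nat :=
  count (fun i => nth 0 w i.+1 < nth 0 w i) (iota 0 (size w).-1).

Definition grassmannian (m : nat) (s : {perm 'I_m}) : bool :=
  descents (perm_word s) <= 1.

Definition id_pat (k : nat) : seq nat := iota 1 k.

(* A binary word contains some 0^j 1^(k-j) iff some cut of it has, in total,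
   at least k zeros before the cut and ones after it.  Counting the words of
   length m with o ones all of whose cuts weigh at most h, by induction on m,
   gives C(m,o) - C(m,h+1) when o <= h and m - o <= h, and 0 otherwise;
   summing over o and substituting a = k - o gives B(k,m).
   A Grassmannian permutation of [m] lists the positions of the zeros of some
   word in increasing order, followed by the positions of its ones.  Its
   increasing subsequences take zeros before and ones after a common cut, so it
   avoids 12...k iff the word avoids every 0^j 1^(k-j).  On such words the
   correspondence is injective when k <= m: if a word with fewer zeros gives
   the same permutation, that permutation is the identity. *)

From mathcomp Require Import all_boot all_order all_algebra all_fingroup.
From mathcomp Require Import zify.
Set Implicit Arguments. Unset Strict Implicit. Unset Printing Implicit Defensive.
Import GRing.Theory.

Lemma card_tuple_set n (P : seq bool -> bool) :
  #|[set w : n.-tuple bool | P w]| = \sum_(w : n.-tuple bool) P w.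
Proof.
by rewrite -sum1_card big_mkcond /=; apply: eq_bigr => w _; rewrite inE; case: (P w).
Qed.

Lemma card_tuple_nil (P : seq bool -> bool) : #|[set w : 0.-tuple bool | P w]| = P [::].
Proof.
by rewrite card_tuple_set (big_pred1 [tuple]) //= => t; rewrite [t]tuple0 /= eqxx.
Qed.

Lemma card_tuple_cons m (P : seq bool -> bool) :
  #|[set w : m.+1.-tuple bool | P w]| =
  #|[set w : m.-tuple bool | P (false :: w)]| + #|[set w : m.-tuple bool | P (true :: w)]|.
Proof.
rewrite !card_tuple_set.
rewrite (reindex (fun x : bool * m.-tuple bool => [tuple of x.1 :: x.2])) /=; last first.
  exists (fun t : m.+1.-tuple bool => (thead t, [tuple of behead t])).
    by move=> [b t] _; congr (_, _); apply: val_inj.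
  by move=> [[|b s] ?] _; apply: val_inj.
rewrite -(pair_big xpredT xpredT (fun b (t : m.-tuple bool) => (P (b :: t) : nat))) /=.
by rewrite big_bool addnC (card_tuple_set _ (fun w => P (false :: w)))
  (card_tuple_set _ (fun w => P (true :: w))).
Qed.

Lemma card_tuple_by_count m (P : seq bool -> bool) :
  #|[set w : m.-tuple bool | P w]| =
  \sum_(o < m.+1) #|[set w : m.-tuple bool | (count id w == o) && P w]|.
Proof.
under [RHS]eq_bigr do rewrite (card_tuple_set _ (fun w => (count id w == _) && P w)).
rewrite card_tuple_set exchange_big /=; apply: eq_bigr => w _.
have ones_lt : count id w < m.+1 by rewrite ltnS -{2}(size_tuple w) count_size.
rewrite (bigD1 (Ordinal ones_lt)) //= eqxx big1 ?addn0 // => o o_ne.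
by case: eqP => //= ones_o; case/eqP: o_ne; apply: val_inj.
Qed.

Lemma has_iota0S (P : pred nat) n : has P (iota 0 n.+1) = P 0 || has (preim S P) (iota 0 n).
Proof. by rewrite -has_map -(iotaDl 1). Qed.

Definition cut_weight (w : seq bool) (p : nat) : nat :=
  count negb (take p w) + count id (drop p w).

Definition has_cut_ge (k : nat) (w : seq bool) : bool :=
  has (fun p => k <= cut_weight w p) (iota 0 (size w).+1).

Lemma has_cut_ge_nil k : has_cut_ge k [::] = (k == 0).
Proof. by rewrite /has_cut_ge /= /cut_weight /= orbF leqn0. Qed.

Lemma cut_weight0 w : cut_weight w 0 = count id w.
Proof. by rewrite /cut_weight take0 drop0. Qed.

Lemma cut_weight_falseS w p : cut_weight (false :: w) p.+1 = (cut_weight w p).+1.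
Proof. by []. Qed.

Lemma cut_weight_trueS w p : cut_weight (true :: w) p.+1 = cut_weight w p.
Proof. by []. Qed.

Lemma has_cut_ge_false k w : has_cut_ge k (false :: w) = (k == 0) || has_cut_ge k.-1 w.
Proof.
rewrite /has_cut_ge [size _]/= has_iota0S cut_weight0.
under eq_has do rewrite /= cut_weight_falseS.
case: k => [|k]; first by rewrite leq0n.
rewrite [_.+1.-1]/= [count id _]/=.
apply/orP/idP => [[k_lt | //]|]; last by right.
by apply/hasP; exists 0; rewrite ?mem_iota // cut_weight0 ltnW.
Qed.

Lemma has_cut_ge_true k w :
  has_cut_ge k (true :: w) = (k <= (count id w).+1) || has_cut_ge k w.
Proof.
rewrite /has_cut_ge [size _]/= has_iota0S cut_weight0.
by under eq_has do rewrite /= cut_weight_trueS.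
Qed.

Definition contains_binpat (k : nat) (w : seq bool) : bool :=
  has (fun j => subseq (binpat k j) w) (iota 0 k.+1).

Lemma avoids_all_binpatsE k w : avoids_all_binpats k w = ~~ contains_binpat k w.
Proof.
apply/forallP/hasPn => [avoid j | avoid j]; last by apply: avoid; rewrite mem_iota /=.
by rewrite mem_iota /= => j_lt; apply: (avoid (Ordinal j_lt)).
Qed.

Lemma binpat0 k : binpat k 0 = nseq k true.
Proof. by rewrite /binpat subn0. Qed.

Lemma subseq_nseq_true n w : subseq (nseq n true) w = (n <= count id w).
Proof.
elim: w n => [|b w IH] [|n] //=.
by case: b => /=; rewrite ?IH // -(IH n.+1).
Qed.

Lemma contains_binpat_nil k : contains_binpat k [::] = (k == 0).
Proof.
case: k => [|k] //; rewrite /contains_binpat has_iota0S binpat0 /=.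
by apply/hasPn.
Qed.

Lemma contains_binpat_false k w :
  contains_binpat k (false :: w) = (k == 0) || contains_binpat k.-1 w.
Proof.
case: k => [|k] //; rewrite /contains_binpat has_iota0S binpat0.
rewrite -[subseq _ (false :: w)]/(subseq (nseq k.+1 true) w).
rewrite (@eq_has _ _ (fun j => subseq (binpat k j) w)) //.
rewrite subseq_nseq_true -[k.+1 == 0]/false orFb.
case: ltnP => // k_lt; rewrite orTb; apply/esym/hasP.
by exists 0; [rewrite mem_iota | rewrite binpat0 subseq_nseq_true ltnW].
Qed.

Lemma contains_binpat_true k w :
  contains_binpat k (true :: w) = (k <= (count id w).+1) || contains_binpat k w.
Proof.
case: k => [|k] //; rewrite /contains_binpat !(has_iota0S _ k.+1) !binpat0.
rewrite -[subseq _ (true :: w)]/(subseq (nseq k true) w) !subseq_nseq_true ltnS.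
rewrite (@eq_has _ (preim S _) (preim S (fun j => subseq (binpat k.+1 j) w))) //.
by case: ltngtP.
Qed.

Lemma contains_binpatE k w : contains_binpat k w = has_cut_ge k w.
Proof.
elim: w k => [|[] w IH] k; first by rewrite contains_binpat_nil has_cut_ge_nil.
  by rewrite contains_binpat_true has_cut_ge_true IH.
by rewrite contains_binpat_false has_cut_ge_false IH.
Qed.

Definition light_words_card m o h : nat :=
  #|[set w : m.-tuple bool | (count id w == o) && ~~ has_cut_ge h.+1 w]|.

Lemma light_words_card0 o h : light_words_card 0 o h = (o == 0).
Proof.
rewrite /light_words_card (card_tuple_nil (fun w => (count id w == o) && ~~ has_cut_ge h.+1 w)).
by rewrite has_cut_ge_nil; case: o.
Qed.

Lemma light_words_cardS m o h : light_words_card m.+1 o h =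
  (if h is h'.+1 then light_words_card m o h' else 0) +
  (if (0 < o) && (o <= h) then light_words_card m o.-1 h else 0).
Proof.
rewrite /light_words_card (card_tuple_cons _ (fun w => (count id w == o) && ~~ has_cut_ge h.+1 w)).
congr (_ + _).
  case: h => [|h]; last by apply: eq_card => w; rewrite !inE has_cut_ge_false.
  by apply: eq_card0 => w; rewrite !inE has_cut_ge_false /= andbF.
case: o => [|o] /=; first by apply: eq_card0 => w; rewrite !inE.
case: ifP => o_le.
  apply: eq_card => w; rewrite !inE has_cut_ge_true eqSS negb_or.
  by case: eqP => //= ->; rewrite -ltnNge ltnS o_le.
apply: eq_card0 => w; rewrite !inE has_cut_ge_true eqSS negb_or.
by case: eqP => //= ->; rewrite -ltnNge ltnS o_le.
Qed.

Lemma light_words_card_closed m o h :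
  light_words_card m o h + (if (o <= h) && (m - o <= h) then 'C(m, h.+1) else 0)
  = (if (o <= h) && (m - o <= h) then 'C(m, o) else 0).
Proof.
elim: m o h => [|m IH] o h.
  by rewrite light_words_card0 sub0n leq0n andbT bin0n; case: o.
rewrite light_words_cardS.
case: o => [|o]; case: h => [|h] /=.
- by [].
- have := IH 0 h; rewrite !subn0 /= bin0.
  case: (leqP m h) => m_le /=; last by rewrite ltnS leqNgt m_le /=; lia.
  rewrite ltnS m_le bin0 (@bin_small m h.+1) ?ltnS // (@bin_small m.+1 h.+2) ?ltnS //.
  lia.
- by rewrite addn0.
- rewrite !ltnS subSS !binS.
  have := IH o.+1 h; have := IH o h.+1.
  case: (leqP o h) => o_le /=; last by rewrite ltnNge (ltnW o_le) /=; lia.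
  case: (leqP (m - o) h.+1) => mo_le /=; last first.
    have -> : (m - o.+1 <= h) = false by lia.
    by rewrite !andbF /=; lia.
  rewrite (leqW o_le) /=.
  have -> : m - o.+1 <= h by lia.
  case: (ltnP o h) => o_lt /=; first by lia.
  have -> : o = h by lia.
  by rewrite /= ?ltnn ?andbT /=; lia.
Qed.

Lemma B_light_words k m : B k.+1 m = \sum_(o < m.+1) light_words_card m o k.
Proof.
rewrite /B (card_tuple_by_count _ (avoids_all_binpats k.+1)).
apply: eq_bigr => o _; apply: eq_card => w.
by rewrite !inE avoids_all_binpatsE contains_binpatE.
Qed.

Section BinomialSum.

Local Open Scope ring_scope.

Definition window_term (m k o : nat) : int :=
  if (m - o <= k)%N then ('C(m, o))%:Z - ('C(m, k.+1))%:Z else 0.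

Lemma light_words_card_int m o k :
  (light_words_card m o k)%:Z = if (o <= k)%N then window_term m k o else 0.
Proof.
have := light_words_card_closed m o k; rewrite /window_term.
by case: (o <= k)%N; case: (m - o <= k)%N => /= card_closed; lia.
Qed.

Lemma binz_subn m n1 n2 :
  binz m (n1%:Z - n2%:Z) = if (n2 <= n1)%N then 'C(m, n1 - n2) else 0%N.
Proof.
case: leqP => n_le; first by rewrite subzn.
suff -> : n1%:Z - n2%:Z = Negz (n2 - n1).-1 by [].
by rewrite NegzE prednK ?subn_gt0 // -subzn ?(ltnW n_le) //; lia.
Qed.

Lemma B_window k m : (B k.+1 m)%:Z = \sum_(0 <= o < k.+1) window_term m k o.
Proof.
rewrite B_light_words (big_morph Posz PoszD (erefl 0%:Z)).
under eq_bigr do rewrite light_words_card_int.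
rewrite -(big_mkord xpredT (fun o => if (o <= k)%N then window_term m k o else 0)).
rewrite (big_nat_widen 0 m.+1 (m + k.+1)); last by lia.
rewrite (big_nat_widen 0 k.+1 (m + k.+1)); last by lia.
rewrite big_mkcond [RHS]big_mkcond /=; apply: eq_big_nat => o _.
rewrite /window_term !ltnS; case: (leqP o k) => o_le //=; case: (leqP o m) => // m_lt.
have -> : (m - o <= k)%N by lia.
by rewrite (bin_small m_lt) (@bin_small m k.+1) ?subrr //; lia.
Qed.

(* Reindexing by a = k + 1 - o; the extra terms with a > k + 1 only occur when
   m <= k, and then C(m, k + 1) = 0. *)
Lemma Bsum_window k m : Bsum k.+1 m = \sum_(0 <= o < k.+1) window_term m k o.
Proof.
rewrite big_nat_rev /= add0n.
transitivity (\sum_(1 <= a < k.+2) window_term m k (k.+1 - a)); last first.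
  by rewrite (big_addn 0 k.+2 1) subn1; apply: eq_big_nat => a _; rewrite addn1.
rewrite /Bsum (big_nat_widen 1 k.+2 (k.+2 + 2 * k.+1)); last by lia.
rewrite (big_nat_widen 1 (2 * k.+1 - m) (k.+2 + 2 * k.+1)); last by lia.
rewrite big_mkcond [RHS]big_mkcond /=; apply: eq_big_nat => a _.
rewrite binz_subn /window_term.
case: (leqP a k.+1) => a_le; first by rewrite ltnS a_le; do 2 case: ifP => //; lia.
by rewrite ltnS (leqNgt a) a_le /=; case: ifP => // a_lt; rewrite bin_small ?subrr //; lia.
Qed.

Lemma B_eq_Bsum k m : (0 < k)%N -> (B k m)%:Z = Bsum k m.
Proof. by case: k => [|k] // _; rewrite B_window Bsum_window. Qed.

End BinomialSum.

Lemma descents_cons2 x y u : descents [:: x, y & u] = (y < x) + descents (y :: u).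
Proof. by rewrite /descents /= (iotaDl 1 0) count_map. Qed.

Lemma descents_eq0 u : (descents u == 0) = sorted leq u.
Proof.
elim: u => [|x [|y u] IH] //.
by rewrite descents_cons2 addn_eq0 IH eqb0 -leqNgt.
Qed.

Lemma descents_cat_sorted u v : sorted leq u -> sorted leq v -> descents (u ++ v) <= 1.
Proof.
rewrite -!descents_eq0 => + /eqP v0; elim: u => [_ | x [|y u] IH] /=.
- by rewrite v0.
- by clear IH; case: v v0 => [//|y v] v0 _; rewrite descents_cons2 v0 addn0 leq_b1.
- by rewrite !descents_cons2 addn_eq0 => /andP[/eqP-> u0]; apply: IH.
Qed.

Lemma descents_le1_split u : descents u <= 1 ->
  exists d, sorted leq (take d u) /\ sorted leq (drop d u).
Proof.
elim: u => [|x u IH]; first by exists 0.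
case: u IH => [|y u] IH; first by exists 0.
rewrite descents_cons2; case: ltnP => y_x /= desc_le.
  by exists 1; split => //; rewrite [drop _ _]/= -descents_eq0; lia.
case: IH => [|[|d] [sorted_take sorted_drop]]; first by lia.
  by exists 0; split => //=; rewrite y_x.
by exists d.+2; split => //=; rewrite y_x.
Qed.

Lemma descents_map_succ u : descents (map S u) = descents u.
Proof.
elim: u => [|x [|y u] IH] //.
by rewrite map_cons map_cons descents_cons2 -map_cons IH descents_cons2 ltnS.
Qed.

Lemma order_iso_iota t k : order_iso t (iota 1 k) = (size t == k) && pairwise ltn t.
Proof.
rewrite /order_iso size_iota; case: eqP => //= size_t.
apply/forallP/idP => [iso | incr i].
  apply/(pairwiseP 0) => i j; rewrite !inE size_t => i_lt j_lt i_lt_j.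
  move/forallP: (iso (Ordinal i_lt)) => /(_ (Ordinal j_lt)) /eqP /=.
  by rewrite !nth_iota // => ->; rewrite ltn_add2l.
apply/forallP => j; rewrite !nth_iota // ltn_add2l.
move/(pairwiseP 0): incr => incr.
case: (ltngtP i j) => [i_lt_j | j_lt_i | /val_inj ->]; last by rewrite ltnn.
- by apply/eqP; apply: incr; rewrite // inE size_t.
- apply/eqP/negbTE; rewrite -leqNgt ltnW //.
  by apply: incr; rewrite // inE size_t.
Qed.

Lemma contains_id_patP k u : reflect
  (exists t, [/\ subseq t u, pairwise ltn t & size t = k]) (contains (id_pat k) u).
Proof.
apply: (iffP existsP) => [[msk]|[t [/subseqP [msk size_msk ->] incr size_t]]].
  rewrite order_iso_iota => /andP [/eqP size_t incr].
  by exists (mask msk u); split => //; apply: mask_subseq.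
exists (@Tuple (size u) bool msk (introT eqP size_msk)).
by rewrite order_iso_iota /= size_t eqxx.
Qed.

Definition zero_positions (w : seq bool) := [seq i <- iota 0 (size w) | ~~ nth false w i].
Definition one_positions (w : seq bool) := [seq i <- iota 0 (size w) | nth false w i].

Definition grass_word (w : seq bool) := zero_positions w ++ one_positions w.

Lemma perm_grass_word w : perm_eq (grass_word w) (iota 0 (size w)).
Proof.
rewrite /grass_word perm_catC.
by apply: permEl; apply: (perm_filterC (fun i => nth false w i)).
Qed.

Lemma size_grass_word w : size (grass_word w) = size w.
Proof. by rewrite (perm_size (perm_grass_word w)) size_iota. Qed.

Lemma uniq_grass_word w : uniq (grass_word w).
Proof. by rewrite (perm_uniq (perm_grass_word w)) iota_uniq. Qed.

Lemma mem_grass_word w x : (x \in grass_word w) = (x < size w).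
Proof. by rewrite (perm_mem (perm_grass_word w)) mem_iota. Qed.

Lemma pairwise_ltn_iota a n : pairwise ltn (iota a n).
Proof. by rewrite -sorted_pairwise ?iota_ltn_sorted //; apply: ltn_trans. Qed.

Lemma pairwise_zero_positions w : pairwise ltn (zero_positions w).
Proof. exact: pairwise_filter (pairwise_ltn_iota _ _). Qed.

Lemma pairwise_one_positions w : pairwise ltn (one_positions w).
Proof. exact: pairwise_filter (pairwise_ltn_iota _ _). Qed.

Lemma cut_weight_iota w p : p <= size w -> cut_weight w p =
  count (fun i => ~~ nth false w i) (iota 0 p) + count (nth false w) (iota p (size w - p)).
Proof.
move=> p_le; rewrite /cut_weight -(map_nth_iota0 false p_le) count_map.
have -> : drop p w = [seq nth false w i | i <- iota p (size w - p)].
  by rewrite map_nth_iota // take_oversize // size_drop.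
by rewrite count_map.
Qed.

Lemma increasing_subseq_of_cut k w : has_cut_ge k w ->
  exists t, [/\ subseq t (grass_word w), pairwise ltn t & size t = k].
Proof.
move/hasP => [p]; rewrite mem_iota /= ltnS => p_le k_le.
set t1 := [seq i <- iota 0 p | ~~ nth false w i].
set t2 := [seq i <- iota p (size w - p) | nth false w i].
have t_sub : subseq (t1 ++ t2) (grass_word w).
  rewrite /grass_word /zero_positions /one_positions -{1 2}(subnKC p_le) iotaD.
  rewrite !filter_cat add0n.
  by apply: cat_subseq; [apply: prefix_subseq | apply: suffix_subseq].
have t_incr : pairwise ltn (t1 ++ t2).
  rewrite pairwise_cat !(pairwise_filter _ (pairwise_ltn_iota _ _)) !andbT.
  apply/allrelP => x y; rewrite !mem_filter !mem_iota.
  by move=> /andP[_ /andP[_ x_lt]] /andP[_ /andP[y_ge _]]; apply: leq_trans x_lt y_ge.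
have t_size : k <= size (t1 ++ t2) by rewrite size_cat !size_filter -cut_weight_iota.
exists (take k (t1 ++ t2)); split.
- exact: subseq_trans (take_subseq _ _) t_sub.
- exact: subseq_pairwise (take_subseq _ _) t_incr.
- by rewrite size_take; case: ltnP => // size_le; apply/eqP; rewrite eqn_leq size_le.
Qed.

(* An increasing subsequence of the Grassmannian word takes zeros before the first
   one it uses and ones from there on. *)
Lemma cut_of_increasing_subseq k w t :
  subseq t (grass_word w) -> pairwise ltn t -> k <= size t -> has_cut_ge k w.
Proof.
move=> /subseqP [msk size_msk ->] t_incr k_le.
have size_take_msk : size (take (size (zero_positions w)) msk) = size (zero_positions w).
  rewrite size_take size_msk size_cat; case: ltnP => // size_le.
  by apply/eqP; rewrite eqn_leq size_le leq_addr.
move: t_incr k_le; rewrite -(cat_take_drop (size (zero_positions w)) msk) mask_cat //.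
set t1 := mask _ (zero_positions w); set t2 := mask _ (one_positions w).
rewrite pairwise_cat size_cat => /and3P [t12 t1_incr t2_incr] k_le.
have t1_zeros x : x \in t1 -> x < size w /\ ~~ nth false w x.
  by move/mem_mask; rewrite mem_filter mem_iota /= => /andP[-> ->].
have t2_ones x : x \in t2 -> x < size w /\ nth false w x.
  by move/mem_mask; rewrite mem_filter mem_iota /= => /andP[-> ->].
pose p := head (size w) t2.
have p_le : p <= size w.
  rewrite /p; case E: t2 => [|h r] //=.
  by case: (t2_ones h); rewrite ?E ?mem_head // => /ltnW.
have t1_le : size t1 <= count (fun i => ~~ nth false w i) (iota 0 p).
  rewrite -size_filter; apply: uniq_leq_size.
    by apply: (pairwise_uniq _ t1_incr) => x; apply: ltnn.
  move=> x x_t1; case: (t1_zeros x x_t1) => x_lt x_zero; rewrite mem_filter x_zero mem_iota /=.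
  rewrite /p; case E: t2 => [|h r] //=.
  by move/allrelP: t12 => /(_ x h x_t1); rewrite E mem_head => /(_ isT).
have t2_le : size t2 <= count (nth false w) (iota p (size w - p)).
  rewrite -size_filter; apply: uniq_leq_size.
    by apply: (pairwise_uniq _ t2_incr) => x; apply: ltnn.
  move=> x x_t2; case: (t2_ones x x_t2) => x_lt x_one.
  rewrite mem_filter x_one mem_iota /= subnKC // x_lt andbT /p.
  move: x_t2 t2_incr; case E: t2 => [|h r] //=.
  by rewrite inE => /orP [/eqP -> //|x_r] /andP [/allP h_r _]; apply/ltnW/h_r.
apply/hasP; exists p; first by rewrite mem_iota.
by rewrite cut_weight_iota //; apply: leq_trans k_le (leq_add t1_le t2_le).
Qed.

Lemma grass_word_of_sorted_runs m (u v : seq nat) :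
  sorted ltn u -> sorted ltn v -> perm_eq (u ++ v) (iota 0 m) ->
  exists w : m.-tuple bool, grass_word w = u ++ v.
Proof.
move=> u_sorted v_sorted uv_perm.
have mem_uv x : (x \in u ++ v) = (x < m) by rewrite (perm_mem uv_perm) mem_iota.
have mem_u x : (x \in u) = (x < m) && (x \notin v).
  move: (perm_uniq uv_perm) (mem_uv x); rewrite iota_uniq cat_uniq mem_cat.
  case/and3P=> _ /hasPn uv_disj _; case: (x \in v) / idP => [x_v | _] uv_x.
    by rewrite /= andbF; apply/negP => x_u; move: (uv_disj _ x_v); rewrite x_u.
  by rewrite -uv_x orbF andbT.
have mem_v x : x \in v -> x < m by move=> x_v; rewrite -mem_uv mem_cat x_v orbT.
pose w := [seq x \in v | x <- iota 0 m].
have size_w : size w == m by rewrite size_map size_iota.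
have mem_filter_w (P : pred bool) x :
    x \in [seq i <- iota 0 m | P (nth false w i)] = (x < m) && P (x \in v).
  rewrite mem_filter mem_iota /= andbC; case: ltnP => //= x_lt.
  by rewrite (nth_map 0) ?size_iota // nth_iota.
have sorted_iota_filter (P : pred nat) : sorted ltn [seq i <- iota 0 m | P i].
  by apply: sorted_filter; [apply: ltn_trans | apply: iota_ltn_sorted].
exists (Tuple size_w); rewrite /grass_word /zero_positions /one_positions size_tuple /=.
congr (_ ++ _); apply: (irr_sorted_eq ltn_trans ltnn (sorted_iota_filter _)) => // x.
- by rewrite (mem_filter_w negb) mem_u.
- rewrite (mem_filter_w id).
  by case: (boolP (x \in v)) => [/mem_v -> // | _]; apply: andbF.
Qed.

Section GrassPerm.

Variable m : nat.
Implicit Type w : m.-tuple bool.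

Lemma grass_word_lt w (i : 'I_m) : nth 0 (grass_word w) i < m.
Proof.
have i_lt : i < size (grass_word w) by rewrite size_grass_word size_tuple.
by have := mem_nth 0 i_lt; rewrite mem_grass_word size_tuple.
Qed.

Definition grass_fun w (i : 'I_m) : 'I_m := Ordinal (grass_word_lt w i).

Lemma grass_fun_inj w : injective (grass_fun w).
Proof.
move=> i j /(congr1 val) /= /eqP.
by rewrite nth_uniq ?uniq_grass_word ?size_grass_word ?size_tuple // => /eqP/val_inj.
Qed.

Definition grass_perm w : {perm 'I_m} := perm (@grass_fun_inj w).

Lemma perm_word_grass_perm w : perm_word (grass_perm w) = map S (grass_word w).
Proof.
rewrite /perm_word.
have -> : [seq (grass_perm w i).+1 | i <- enum 'I_m]
    = map S [seq nth 0 (grass_word w) j | j <- map val (enum 'I_m)].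
  by rewrite -!map_comp; apply: eq_map => i /=; rewrite permE.
by rewrite val_enum_ord map_nth_iota0 ?take_oversize // size_grass_word size_tuple.
Qed.

Lemma grassmannian_grass_perm w : grassmannian (grass_perm w).
Proof.
rewrite /grassmannian perm_word_grass_perm descents_map_succ.
by apply: descents_cat_sorted; apply: sorted_filter;
  [apply: leq_trans | apply: iota_sorted | apply: leq_trans | apply: iota_sorted].
Qed.

Lemma contains_id_pat_grass_perm k w :
  contains (id_pat k) (perm_word (grass_perm w)) = has_cut_ge k w.
Proof.
rewrite perm_word_grass_perm; apply/contains_id_patP/idP.
  move=> [t [/subseqP [msk size_msk ->] t_incr t_size]].
  apply: (@cut_of_increasing_subseq k w (mask msk (grass_word w))).
  - exact: mask_subseq.
  - by move: t_incr; rewrite -map_mask pairwise_map.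
  - by rewrite -t_size -map_mask size_map.
move/increasing_subseq_of_cut => [t [t_sub t_incr t_size]].
by exists (map S t); rewrite map_subseq // pairwise_map size_map.
Qed.

End GrassPerm.

(* Writing u2 = u1 ++ x and v1 = x ++ v2, the overlap x is nonempty and its
   head lies between u1 and v1. *)
Lemma pairwise_cat_shift (T : eqType) (r : rel T) (u1 v1 u2 v2 : seq T) :
  transitive r -> u1 ++ v1 = u2 ++ v2 -> size u1 < size u2 ->
  pairwise r u2 -> pairwise r v1 -> pairwise r (u1 ++ v1).
Proof.
move=> r_tr uv_eq size_lt u2_r v1_r.
have u2_take : take (size u1) u2 = u1.
  by rewrite -(takel_cat v2 (ltnW size_lt)) -uv_eq take_size_cat.
have v1_eq : v1 = drop (size u1) u2 ++ v2.
  by rewrite -(drop_size_cat v1 (erefl (size u1))) uv_eq drop_cat size_lt.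
set x := drop (size u1) u2 in v1_eq.
have x_gt0 : 0 < size x by rewrite size_drop subn_gt0.
move: u2_r; rewrite -(cat_take_drop (size u1) u2) u2_take -/x pairwise_cat.
case/and3P => u1_x u1_r _.
move: (v1_r); rewrite v1_eq pairwise_cat => /and3P[x_v2 _ _].
rewrite pairwise_cat u1_r -v1_eq v1_r v1_eq allrel_catr u1_x !andbT.
apply/allrelP => y z y_u1 z_v2.
move: x_gt0 u1_x x_v2; case: x {v1_eq} => [//|h xs] _ u1_x x_v2.
apply: (@r_tr h).
  by move/allrelP: u1_x => /(_ y h y_u1 (mem_head _ _)).
by move/allrelP: x_v2 => /(_ h z (mem_head _ _) z_v2).
Qed.

Lemma zero_positions_inj m : injective (fun w : m.-tuple bool => zero_positions w).
Proof.
move=> w1 w2 /= zeros_eq; apply: val_inj; apply: (@eq_from_nth _ false).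
  by rewrite !size_tuple.
move=> i; rewrite size_tuple => i_lt.
have := congr1 (fun s => i \in s) zeros_eq.
by rewrite /= !mem_filter !mem_iota !size_tuple i_lt /= !andbT; apply: negb_inj.
Qed.

Lemma grass_perm_inj k m : k <= m ->
  {in [set w : m.-tuple bool | ~~ has_cut_ge k w] &, injective (@grass_perm m)}.
Proof.
move=> k_le w1 w2; rewrite !inE => w1_light w2_light perm_eq12.
have word_eq : grass_word w1 = grass_word w2.
  by apply: (inj_map succn_inj); rewrite -!perm_word_grass_perm perm_eq12.
(* Fewer zeros on one side would make its whole Grassmannian word increasing. *)
have cut_of_fewer_zeros (w w' : m.-tuple bool) : grass_word w = grass_word w' ->
    size (zero_positions w) < size (zero_positions w') -> has_cut_ge k w.
  move=> eq_ww' size_lt; apply: (@cut_of_increasing_subseq k w (grass_word w)) => //.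
    apply: pairwise_cat_shift ltn_trans eq_ww' size_lt _ _.
      exact: pairwise_zero_positions.
    exact: pairwise_one_positions.
  by rewrite size_grass_word size_tuple.
apply: zero_positions_inj.
case: (ltngtP (size (zero_positions w1)) (size (zero_positions w2))) => size_cmp.
- by move: w1_light; rewrite (cut_of_fewer_zeros w1 w2 word_eq size_cmp).
- by move: w2_light; rewrite (cut_of_fewer_zeros w2 w1 (esym word_eq) size_cmp).
by have := congr1 (take (size (zero_positions w1))) word_eq;
  rewrite /grass_word take_size_cat // size_cmp take_size_cat.
Qed.

Lemma perm_word_inj m : injective (@perm_word m).
Proof.
move=> s1 s2 word_eq; apply/permP => i; have := congr1 (fun l => nth 0 l i) word_eq.
rewrite /perm_word !(nth_map i) -?enumT ?size_enum_ord // nth_ord_enum => [[eq_i]].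
exact: val_inj.
Qed.

Lemma grass_perm_surj m (s : {perm 'I_m}) :
  grassmannian s -> exists w : m.-tuple bool, grass_perm w = s.
Proof.
set u := [seq val (s i) | i <- enum 'I_m].
have word_s : perm_word s = map S u by rewrite /perm_word /u -map_comp.
have u_uniq : uniq u.
  by rewrite map_inj_uniq ?enum_uniq // => i j /val_inj; apply: perm_inj.
have u_perm : perm_eq u (iota 0 m).
  apply: uniq_perm; rewrite ?iota_uniq // => x; rewrite mem_iota /=.
  apply/mapP/idP => [[i _ ->] | x_lt]; first exact: ltn_ord.
  by exists ((s^-1)%g (Ordinal x_lt)); rewrite ?mem_enum // permKV.
rewrite /grassmannian word_s descents_map_succ => /descents_le1_split[d [u1_sorted u2_sorted]].
have [w w_word] : exists w : m.-tuple bool, grass_word w = take d u ++ drop d u.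
  apply: grass_word_of_sorted_runs; rewrite ?cat_take_drop //.
    by rewrite ltn_sorted_uniq_leq u1_sorted take_uniq.
  by rewrite ltn_sorted_uniq_leq u2_sorted drop_uniq.
exists w; apply: perm_word_inj.
by rewrite perm_word_grass_perm word_s w_word cat_take_drop.
Qed.

Lemma card_grassmannian_avoiding k m : k <= m ->
  #|[set s : {perm 'I_m} | grassmannian s && avoids (id_pat k) (perm_word s)]| = B k m.
Proof.
move=> k_le.
have -> : [set s : {perm 'I_m} | grassmannian s && avoids (id_pat k) (perm_word s)]
    = @grass_perm m @: [set w : m.-tuple bool | ~~ has_cut_ge k w].
  apply/setP => s; rewrite inE; apply/andP/imsetP => [[s_grass s_avoid] | [w]].
    have [w w_s] := grass_perm_surj s_grass.
    by exists w; rewrite // inE -contains_id_pat_grass_perm w_s.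
  rewrite inE => w_light ->; split; first exact: grassmannian_grass_perm.
  by rewrite /avoids contains_id_pat_grass_perm.
rewrite card_in_imset; last exact: grass_perm_inj.
by apply: eq_card => w; rewrite !inE avoids_all_binpatsE contains_binpatE.
Qed.

Theorem mainTheorem7 (k m : nat) (hk : (1 <= k)%N) (hm : (1 <= m)%N) :
  Posz (B k m) = Bsum k m /\
  ((2 <= k)%N -> (k <= m)%N ->
    Posz #|[set s : {perm 'I_m} | grassmannian s && avoids (id_pat k) (perm_word s)]|
    = Bsum k m).
Proof.
split; first exact: B_eq_Bsum.
by move=> _ k_le; rewrite card_grassmannian_avoiding // B_eq_Bsum.
Qed.
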